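(* Let $\Theta$ be a causal theory over $\mathfrak L$, let $p\in\mathcal L_\Box$ and $\Gamma,\Delta\subseteq\mathcal L_\Box$, and suppose $\Gamma\vdash_\Box\Box p,\Delta$ is derivable in $\mathbf S_\Theta$. Then there is a set $\Delta_0\subseteq\mathfrak L$ such that $\Gamma\vdash_\Box\Delta_0,\Delta$ is derivable and, for each $a\in\Delta_0$, there is some $b\in\mathfrak L$ such that $a\vdash_\Box\Box b$ and $b\vdash_\Box p$ are derivable.
   Context: $\mathfrak L$ is a classical propositional language. A causal rule is $\phi\triangleright\psi$ with $\phi,\psi\in\mathfrak L$; a causal theory $\Theta$ is a set of causal rules. $\mathcal L_\Box$ is generated by $\mathfrak L$ and a unary $\Box$. The sequent calculus $\mathbf S_\Theta$ derives sequents $\Gamma\vdash_\Box\Delta$ (collections of $\mathcal L_\Box$-formulas, possibly infinite; derivations well-founded, possibly infinitely branching) via: axiom $p\vdash_\Box p$; $\perp\vdash_\Box$; $\vdash_\Box\top$; weakening and contraction on both sides; classical two-sided LK rules for $\neg,\wedge,\vee,\to$ with shared contexts; $\Box$R: if $\phi_1\triangleright\psi_1,\dots,\phi_k\triangleright\psi_k\in\Theta$ and $\psi_1,\dots,\psi_k\vdash_\Box p$ is derivable, from $\Gamma\vdash_\Box\phi_1\wedge\dots\wedge\phi_k,\Delta$ infer $\Gamma\vdash_\Box\Box p,\Delta$; $\Box$L: letting $\{S_j\}_{j\in J}$ be all finite $S_j\subseteq\Theta$ with $\{\psi:\phi\triangleright\psi\in S_j\}\vdash_\Box p$ derivable, from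 $\Gamma,\{\phi:\phi\triangleright\psi\in S_j\}\vdash_\Box\Delta$ for all $j\in J$ infer $\Gamma,\Box p\vdash_\Box\Delta$; multicut: from $\Gamma\vdash_\Box p^m,\Delta$ and $\Gamma',p^n\vdash_\Box\Delta'$ ($m,n>0$) infer $\Gamma,\Gamma'\vdash_\Box\Delta,\Delta'$. *)

From Stdlib Require Import List.
Import ListNotations.
Set Implicit Arguments.

(* The modal language L_Box over a type of propositional atoms; the
   box-free formulas (predicate [propositional]) form the classical
   language frak L. *)
Inductive form (atom : Type) : Type :=
| Var : atom -> form atom
| Bot : form atom
| Top : form atom
| Neg : form atom -> form atom
| And : form atom -> form atom -> form atom
| Or  : form atom -> form atom -> form atom
| Imp : form atom -> form atom -> form atom
| Box : form atom -> form atom.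

Arguments Bot {atom}.
Arguments Top {atom}.

Fixpoint propositional (atom : Type) (f : form atom) : Prop :=
  match f with
  | Var _ | Bot | Top => True
  | Neg a => propositional a
  | And a b | Or a b | Imp a b => propositional a /\ propositional b
  | Box _ => False
  end.

Definition causal_theory (atom : Type) (Theta : form atom -> form atom -> Prop) : Prop :=
  forall phi psi, Theta phi psi -> propositional phi /\ propositional psi.

Definition fset (atom : Type) := form atom -> Prop.
Definition sempty (atom : Type) : fset atom := fun _ => False.
Definition ssing (atom : Type) (f : form atom) : fset atom := fun x => x = f.
Definition sunion (atom : Type) (A B : fset atom) : fset atom := fun x => A x \/ B x.
Definition sadd (atom : Type) (f : form atom) (A : fset atom) : fset atom :=
  fun x => x = f \/ A x.
Definition lset (atom : Type) (l : list (form atom)) : fset atom := fun x => In x l.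
Definition sincl (atom : Type) (A B : fset atom) : Prop := forall x, A x -> B x.

Arguments sempty {atom}.

Fixpoint bigand (atom : Type) (l : list (form atom)) : form atom :=
  match l with
  | [] => Top
  | [x] => x
  | x :: l' => And x (bigand l')
  end.

Definition rules_in (atom : Type) (Theta : form atom -> form atom -> Prop)
  (S : list (form atom * form atom)) : Prop :=
  forall r, In r S -> Theta (fst r) (snd r).

(* The rules of S_Theta, relative to a side-condition relation
   [E p psis] meaning "psi_1, ..., psi_k |-_Box p is derivable". *)
Inductive derivS (atom : Type) (Theta : form atom -> form atom -> Prop)
  (E : form atom -> list (form atom) -> Prop) : fset atom -> fset atom -> Prop :=
| dAx : forall p, derivS Theta E (ssing p) (ssing p)
| dBotL : derivS Theta E (ssing Bot) sempty
| dTopR : derivS Theta E sempty (ssing Top)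
| dWeak : forall G D G' D', derivS Theta E G D -> sincl G G' -> sincl D D' ->
    derivS Theta E G' D'
| dNegL : forall G D a, derivS Theta E G (sadd a D) -> derivS Theta E (sadd (Neg a) G) D
| dNegR : forall G D a, derivS Theta E (sadd a G) D -> derivS Theta E G (sadd (Neg a) D)
| dAndL : forall G D a b, derivS Theta E (sadd a (sadd b G)) D ->
    derivS Theta E (sadd (And a b) G) D
| dAndR : forall G D a b, derivS Theta E G (sadd a D) -> derivS Theta E G (sadd b D) ->
    derivS Theta E G (sadd (And a b) D)
| dOrL : forall G D a b, derivS Theta E (sadd a G) D -> derivS Theta E (sadd b G) D ->
    derivS Theta E (sadd (Or a b) G) D
| dOrR : forall G D a b, derivS Theta E G (sadd a (sadd b D)) ->
    derivS Theta E G (sadd (Or a b) D)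
| dImpL : forall G D a b, derivS Theta E G (sadd a D) -> derivS Theta E (sadd b G) D ->
    derivS Theta E (sadd (Imp a b) G) D
| dImpR : forall G D a b, derivS Theta E (sadd a G) (sadd b D) ->
    derivS Theta E G (sadd (Imp a b) D)
| dBoxR : forall G D p (S : list (form atom * form atom)),
    rules_in Theta S -> E p (map snd S) ->
    derivS Theta E G (sadd (bigand (map fst S)) D) ->
    derivS Theta E G (sadd (Box p) D)
| dBoxL : forall G D p,
    (forall S : list (form atom * form atom), rules_in Theta S -> E p (map snd S) ->
       derivS Theta E (sunion G (lset (map fst S))) D) ->
    derivS Theta E (sadd (Box p) G) D
| dCut : forall G D G' D' p, derivS Theta E G (sadd p D) -> derivS Theta E (sadd p G') D' ->
    derivS Theta E (sunion G G') (sunion D D').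

(* D is THE derivability relation of S_Theta: it is closed under, and
   generated by, the rules, where the side conditions of Box-R / Box-L
   refer to D itself. *)
Definition S_derivability (atom : Type) (Theta : form atom -> form atom -> Prop)
  (D : fset atom -> fset atom -> Prop) : Prop :=
  forall G Dl, D G Dl <-> derivS Theta (fun p psis => D (lset psis) (ssing p)) G Dl.

(* Let D0 be the set of all propositional a for which some propositional b
   satisfies  a |- Box b  and  b |- p ("a explains p").  We show that the
   single sequent  Box p |- D0  is derivable and then cut it against
   G |- Box p, Dl  to obtain  G |- D0, Dl.

   The sequent  Box p |- D0  comes from one application of Box-L: for every
   finite set S of rules of Theta whose heads psi_1..psi_k derive p, the
   bodies phi_1..phi_k derive their conjunction (bigand_intro), and that
   conjunction lies in D0, witnessed by b := psi_1 /\ ... /\ psi_k: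
   - phi_1 /\ ... /\ phi_k |- Box b  by Box-R with S, using psi's |- b;
   - b |- p  by breaking the conjunction apart on the left (bigand_elim). *)

From Stdlib Require Import List.
Set Implicit Arguments.

Ltac set_incl :=
  let z := fresh "z" in let Hz := fresh "Hz" in
  intros z Hz; unfold sunion, sadd, ssing, lset, sempty in *; simpl in *;
  firstorder (subst; auto).

Section RuleSystem.
Variable atom : Type.
Variable Theta : form atom -> form atom -> Prop.
Variable E : form atom -> list (form atom) -> Prop.
Notation Der := (derivS Theta E).

Lemma bigand_intro (l : list (form atom)) : Der (lset l) (ssing (bigand l)).
Proof.
  induction l as [|x [|y l'] IH].
  - eapply dWeak; [apply dTopR | set_incl | set_incl].
  - eapply dWeak; [apply (dAx Theta E x) | set_incl | set_incl].
  - change (bigand (x :: y :: l')) with (And x (bigand (y :: l'))).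
    eapply dWeak;
      [apply (dAndR (G := lset (x :: y :: l')) (D := sempty)) | set_incl | set_incl].
    + eapply dWeak; [apply (dAx Theta E x) | set_incl | set_incl].
    + eapply dWeak; [exact IH | set_incl | set_incl].
Qed.

Lemma bigand_elim (l : list (form atom)) (G Dl : fset atom) :
  Der (sunion G (lset l)) Dl -> Der (sadd (bigand l) G) Dl.
Proof.
  revert G; induction l as [|x [|y l'] IH]; intros G H.
  - eapply dWeak; [exact H | set_incl | set_incl].
  - eapply dWeak; [exact H | set_incl | set_incl].
  - change (bigand (x :: y :: l')) with (And x (bigand (y :: l'))).
    apply dAndL.
    assert (Hrest : Der (sadd (bigand (y :: l')) (sadd x G)) Dl).
    { apply IH; eapply dWeak; [exact H | set_incl | set_incl]. }
    eapply dWeak; [exact Hrest | set_incl | set_incl].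
Qed.

Lemma bodies_derive_box (S : list (form atom * form atom)) (b : form atom) :
  rules_in Theta S -> E b (map snd S) ->
  Der (ssing (bigand (map fst S))) (ssing (Box b)).
Proof.
  intros HS Hb.
  assert (Hbox : Der (ssing (bigand (map fst S))) (sadd (Box b) sempty)).
  { eapply dBoxR; [exact HS | exact Hb |].
    eapply dWeak; [apply dAx | set_incl | set_incl]. }
  eapply dWeak; [exact Hbox | set_incl | set_incl].
Qed.

Lemma box_derives_bodies (p : form atom) (W : fset atom) :
  (forall S, rules_in Theta S -> E p (map snd S) -> W (bigand (map fst S))) ->
  Der (ssing (Box p)) W.
Proof.
  intros HW.
  assert (Hbox : Der (sadd (Box p) sempty) W).
  { apply dBoxL; intros S HS Hp.
    eapply dWeak; [apply (bigand_intro (map fst S)) | set_incl |].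
    intros z Hz; unfold ssing in Hz; subst; exact (HW S HS Hp). }
  eapply dWeak; [exact Hbox | set_incl | set_incl].
Qed.

Lemma replace_by_cut (G Dl W : fset atom) (q : form atom) :
  Der G (sadd q Dl) -> Der (ssing q) W -> Der G (sunion W Dl).
Proof.
  intros Hq HW.
  assert (HqW : Der (sadd q sempty) W)
    by (eapply dWeak; [exact HW | set_incl | set_incl]).
  eapply dWeak; [exact (dCut Hq HqW) | set_incl | set_incl].
Qed.
End RuleSystem.

Lemma bigand_propositional (atom : Type) (l : list (form atom)) :
  (forall x, In x l -> propositional x) -> propositional (bigand l).
Proof.
  induction l as [|x [|y l'] IH]; intros H; simpl; auto.
  - apply H; simpl; auto.
  - split; [apply H; simpl; auto | apply IH; intros; apply H; simpl; auto].
Qed.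

Lemma rule_sides_propositional (atom : Type) (Theta : form atom -> form atom -> Prop)
  (S : list (form atom * form atom)) :
  causal_theory Theta -> rules_in Theta S ->
  propositional (bigand (map fst S)) /\ propositional (bigand (map snd S)).
Proof.
  intros hTheta HS.
  split; apply bigand_propositional; intros x Hx;
    apply in_map_iff in Hx as [[u v] [<- Hi]]; apply (hTheta _ _ (HS _ Hi)).
Qed.

Definition explanations (atom : Type) (D : fset atom -> fset atom -> Prop)
  (p : form atom) : fset atom :=
  fun a => propositional a /\ exists b, propositional b /\
    D (ssing a) (ssing (Box b)) /\ D (ssing b) (ssing p).

Lemma bodies_explain (atom : Type) (Theta : form atom -> form atom -> Prop)
  (hTheta : causal_theory Theta)
  (D : fset atom -> fset atom -> Prop) (hD : S_derivability Theta D)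
  (p : form atom) (S : list (form atom * form atom)) :
  rules_in Theta S -> D (lset (map snd S)) (ssing p) ->
  explanations D p (bigand (map fst S)).
Proof.
  intros HS Hp.
  destruct (rule_sides_propositional hTheta HS) as [Hbodies Hheads].
  split; [exact Hbodies |].
  exists (bigand (map snd S)); split; [exact Hheads | split].
  - apply hD, bodies_derive_box; [exact HS |].
    apply hD, bigand_intro.
  - apply hD in Hp; apply hD.
    assert (Helim : derivS Theta (fun q psis => D (lset psis) (ssing q))
                      (sadd (bigand (map snd S)) sempty) (ssing p)).
    { apply bigand_elim; eapply dWeak; [exact Hp | set_incl | set_incl]. }
    eapply dWeak; [exact Helim | set_incl | set_incl].
Qed.

Theorem mainTheorem16 (atom : Type) (Theta : form atom -> form atom -> Prop)
  (hTheta : causal_theory Theta)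
  (D : fset atom -> fset atom -> Prop) (hD : S_derivability Theta D)
  (p : form atom) (G Dl : fset atom) :
  D G (sadd (Box p) Dl) ->
  exists D0 : fset atom,
    (forall a, D0 a -> propositional a) /\
    D G (sunion D0 Dl) /\
    (forall a, D0 a -> exists b, propositional b /\
        D (ssing a) (ssing (Box b)) /\ D (ssing b) (ssing p)).
Proof.
  intros HG.
  exists (explanations D p).
  split; [intros a [Ha _]; exact Ha |].
  split; [| intros a [_ Ha]; exact Ha].
  apply hD; apply hD in HG.
  apply (replace_by_cut HG).
  apply box_derives_bodies; intros S HS Hp.
  exact (bodies_explain hTheta hD p HS Hp).
Qed.
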